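(* Let $k\ge 1$ be an integer, $S$ a poset, and let $S\otimes_i G_i$ and $S\otimes_i H_i$ be terminating ordered joins in the same shape $S$. If $\Gamma_k(G_i)=\Gamma_k(H_i)$ for every $i\in S$, then $\Gamma_k(S\otimes_i G_i)=\Gamma_k(S\otimes_i H_i)$.
   Context: All games are impartial combinatorial games under normal play; a game is determined by its set of options, and $G \to G'$ means $G'$ is an option of $G$. A game is terminating if it admits no infinite sequence of moves. $\mathbf{0}$ denotes the game with no options. For terminating games define recursively: $\Gamma_0(G)=\operatorname{mex}\{\Gamma_0(G') : G\to G'\}$ (the Grundy number; $\operatorname{mex}\Lambda$ is the least ordinal not in the set of ordinals $\Lambda$), and for $k\ge1$, $\Gamma_k(G)=\{\Gamma_{k-1}(G') : G\to G'\}$. Ordered join: for a poset $S$ and a family $(G_i)_{i\in S}$ of games, $S \otimes_i G_i$ is the game whose options are exactly the ordered joins $S \otimes_i G'_i$ obtained by choosing one $i_0\in S$ and an option $G_{i_0}\to G'_{i_0}$, and setting $G'_i=\mathbf{0}$ for all $i>i_0$ and $G'_i=G_i$ for all other $i\ne i_0$. *)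

From Stdlib Require Import Arith.

Inductive Ord : Type := osup : forall (I : Type), (I -> Ord) -> Ord.

(** [osup I f] denotes the least ordinal strictly above every [f i]. *)
Fixpoint ole (a b : Ord) {struct a} : Prop :=
  match a with
  | osup A f => match b with
    | osup J g => forall i : A, exists j : J, ole (f i) (g j)
    end
  end.

Definition olt (a b : Ord) : Prop :=
  match b with osup J g => exists j : J, ole a (g j) end.

Definition oeq (a b : Ord) : Prop := ole a b /\ ole b a.

(** A game is determined
    by its (hereditary) set of options, i.e. games are taken up to
    bisimulation; every notion below is bisimulation-invariant. *)
Record Game : Type := MkGame {
  pos : Type;
  mv : pos -> pos -> Prop;
  root : pos
}.

(* ties the universe of positions to the universe of ordinal indices, so
   that Grundy values of all games are representable in [Ord] *)
Definition pos_rank (G : Game) (f : pos G -> Ord) : Ord := osup (pos G) f.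

Definition terminating (G : Game) : Prop :=
  Acc (fun y x => mv G x y) (root G).

(** * Grundy value: [grundy mv x a] means Gamma_0(x) = a, i.e.
      a = mex { Gamma_0(y) : x -> y }  (membership up to [oeq]). *)
Inductive grundy {P : Type} (m : P -> P -> Prop) : P -> Ord -> Prop :=
| grundy_intro (x : P) (a : Ord) :
    (forall y, m x y -> exists b, grundy m y b /\ ~ oeq b a) ->
    (forall c, olt c a -> exists y b, m x y /\ grundy m y b /\ oeq b c) ->
    grundy m x a.

(** For k = 0 this is equality of Grundy values; for k >= 1,
    Gamma_k(x) = { Gamma_{k-1}(x') : x -> x' } and equality of these sets
    is extensional equality, written out. *)
Fixpoint gamma_eq (k : nat) {P Q : Type} (mP : P -> P -> Prop)
    (x : P) (mQ : Q -> Q -> Prop) (y : Q) {struct k} : Prop :=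
  match k with
  | 0 => exists a b, grundy mP x a /\ grundy mQ y b /\ oeq a b
  | S k' =>
      (forall x', mP x x' -> exists y', mQ y y' /\ gamma_eq k' mP x' mQ y') /\
      (forall y', mQ y y' -> exists x', mP x x' /\ gamma_eq k' mP x' mQ y')
  end.

Definition Gamma_eq (k : nat) (G H : Game) : Prop :=
  gamma_eq k (mv G) (root G) (mv H) (root H).

(** Positions are families i |-> option (position of G_i), where [None]
    stands for the zero game 0.  A move picks i0, a move G_{i0} -> G'_{i0},
    sets components i > i0 to 0 and leaves all other components unchanged. *)
Definition slt {S : Type} (le : S -> S -> Prop) (i j : S) : Prop :=
  le i j /\ i <> j.

Definition join_mv {S : Type} (le : S -> S -> Prop) (G : S -> Game)
    (f f' : forall i, option (pos (G i))) : Prop :=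
  exists (i0 : S) (u v : pos (G i0)),
    f i0 = Some u /\ mv (G i0) u v /\ f' i0 = Some v /\
    (forall i, slt le i0 i -> f' i = None) /\
    (forall i, i <> i0 -> ~ slt le i0 i -> f' i = f i).

Definition ojoin {S : Type} (le : S -> S -> Prop) (G : S -> Game) : Game :=
  {| pos := forall i, option (pos (G i));
     mv := join_mv le G;
     root := fun i => Some (root (G i)) |}.

(** Write x ~k y for Γ_k(x) = Γ_k(y).  Two general facts about terminating
   games are used.  First, the Sprague–Grundy criterion: x ~0 y holds as soon
   as the second player can win the disjunctive sum x + y, which is the case
   whenever there is a relation containing (x, y) that the second player can
   restore after every move (a strategy invariant).  Second, x ~(k+1) y
   implies x ~k y.

   Positions f, g of two joins S⊗G_i and S⊗H_i are compared componentwise.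
   Invariant [agree k]: each pair of components is (0, 0) or ~k-related.
   Invariant [agree_mixed k]: each pair is (0, 0), or ~(k+1)-related, or
   ~k-related with all components strictly above it equal to 0 in both
   positions.  If [agree (k+1)] holds and one join moves at i0, copying the
   move at i0 in the other join leads to [agree_mixed k]; and
   [agree_mixed (k+1)] implies [agree (k+1)] by the weakening fact.  By
   induction on k, [agree_mixed k] forces f ~k g, the base case k = 0 being
   the Sprague–Grundy criterion with [agree_mixed 0] as strategy invariant. *)
From Stdlib Require Import Arith.
From Stdlib Require Import Classical ClassicalEpsilon Eqdep Relation_Operators Transitive_Closure.

Lemma ole_refl a : ole a a.
Proof. induction a as [I f IH]; simpl; intro i; exists i; apply IH. Qed.

Lemma ole_trans a : forall b c, ole a b -> ole b c -> ole a c.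
Proof.
  induction a as [I f IH]; intros [J g] [K h]; simpl; intros H1 H2 i.
  destruct (H1 i) as [j Hj]; destruct (H2 j) as [l Hl]; exists l; eauto.
Qed.

Lemma olt_ole_trans a b c : olt a b -> ole b c -> olt a c.
Proof.
  destruct b as [J g], c as [K h]; simpl; intros [j Hj] H.
  destruct (H j) as [l Hl]; exists l; eapply ole_trans; eauto.
Qed.

Lemma ole_olt_trans a b c : ole a b -> olt b c -> olt a c.
Proof.
  destruct c as [K h]; simpl; intros H [l Hl]; exists l; eapply ole_trans; eauto.
Qed.

Lemma olt_irrefl a : ~ olt a a.
Proof.
  induction a as [I f IH]; simpl; intros [i Hi]. apply (IH i).
  apply olt_ole_trans with (osup I f); auto. simpl; exists i; apply ole_refl.
Qed.

Lemma osup_least J (h : J -> Ord) x : (forall j, olt (h j) x) -> ole (osup J h) x.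
Proof. destruct x as [K g]; simpl; auto. Qed.

Lemma ole_or_olt a : forall c, ole a c \/ olt c a.
Proof.
  induction a as [I f IH]; intros [J h].
  destruct (classic (forall i, exists j, ole (f i) (h j))) as [Y|N]; [left; exact Y|].
  right. apply not_all_ex_not in N as [i Ni]. exists i. apply osup_least; intro j.
  destruct (IH i (h j)) as [L|L]; auto.
  exfalso; apply Ni; exists j; exact L.
Qed.

Lemma ord_trichotomy a b : oeq a b \/ olt a b \/ olt b a.
Proof.
  destruct (ole_or_olt a b) as [H1|H1]; [|right; right; exact H1].
  destruct (ole_or_olt b a) as [H2|H2]; [left; split; auto|right; left; exact H2].
Qed.

Lemma oeq_sym a b : oeq a b -> oeq b a.
Proof. intros [x y]; split; auto. Qed.

Lemma oeq_trans a b c : oeq a b -> oeq b c -> oeq a c.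
Proof. intros [x y] [z w]; split; eapply ole_trans; eauto. Qed.

Lemma olt_oeq_trans a b c : olt a b -> oeq b c -> olt a c.
Proof. intros H [x _]; eapply olt_ole_trans; eauto. Qed.

Lemma mex_exists (I : Type) (F : I -> Ord) :
  exists a, (forall i, ~ oeq (F i) a) /\ (forall c, olt c a -> exists i, oeq (F i) c).
Proof.
  pose (attained := fun d => exists i, oeq (F i) d).
  (* the supremum of those values whose whole initial segment is attained *)
  pose (a := osup {i : I | forall d, ole d (F i) -> attained d} (fun t => F (proj1_sig t))).
  assert (below : forall c, olt c a -> attained c) by (intros c [[i Hi] Hc]; exact (Hi c Hc)).
  exists a; split; [|exact below].
  intros i E.
  assert (Hi : forall d, ole d (F i) -> attained d).
  { intros d Hd; destruct (ord_trichotomy d a) as [Ed|[Ld|Ld]].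
    - exists i; eapply oeq_trans; [exact E|apply oeq_sym, Ed].
    - apply below, Ld.
    - exfalso; apply (olt_irrefl a); eapply olt_ole_trans; [exact Ld|].
      eapply ole_trans; [exact Hd|exact (proj1 E)]. }
  apply (olt_irrefl a); eapply ole_olt_trans; [exact (proj2 E)|].
  exists (exist _ i Hi); apply ole_refl.
Qed.

Definition terminates {P : Type} (m : P -> P -> Prop) (x : P) : Prop :=
  Acc (fun y x => m x y) x.

Lemma grundy_inv {P} (m : P -> P -> Prop) x a : grundy m x a ->
  (forall y, m x y -> exists b, grundy m y b /\ ~ oeq b a) /\
  (forall c, olt c a -> exists y b, m x y /\ grundy m y b /\ oeq b c).
Proof. intro H; inversion H; subst; auto. Qed.

Lemma grundy_exists {P} (m : P -> P -> Prop) x : terminates m x -> exists a, grundy m x a.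
Proof.
  unfold terminates; induction 1 as [x _ IH].
  pose (value := fun s : {y | m x y} =>
    proj1_sig (constructive_indefinite_description _ (IH (proj1_sig s) (proj2_sig s)))).
  assert (Hvalue : forall s, grundy m (proj1_sig s) (value s))
    by (intro s; exact (proj2_sig (constructive_indefinite_description _ _))).
  destruct (mex_exists _ value) as [a [Hout Hin]].
  exists a; constructor.
  - intros y my; exists (value (exist _ y my)); split; [exact (Hvalue (exist _ y my))|apply Hout].
  - intros c Hc; destruct (Hin c Hc) as [[y my] E].
    exists y, (value (exist _ y my)).
    split; [exact my|split; [exact (Hvalue (exist _ y my))|exact E]].
Qed.

(* [answers mP mQ R x y]: every move x -> x' in the left summand of the sum
   x + y can be answered, in either summand, by a move back into R. *)
Definition answers {P Q : Type} (mP : P -> P -> Prop) (mQ : Q -> Q -> Prop)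
    (R : P -> Q -> Prop) (x : P) (y : Q) : Prop :=
  forall x', mP x x' ->
    (exists x'', mP x' x'' /\ R x'' y) \/ (exists y', mQ y y' /\ R x' y').

(* A strategy invariant for the second player in sums of P-games and Q-games. *)
Definition strategy {P Q : Type} (mP : P -> P -> Prop) (mQ : Q -> Q -> Prop)
    (R : P -> Q -> Prop) : Prop :=
  forall x y, R x y -> answers mP mQ R x y /\ answers mQ mP (fun y x => R x y) y x.

Lemma answers_impl {P Q} (mP : P -> P -> Prop) (mQ : Q -> Q -> Prop) (R R' : P -> Q -> Prop) x y :
  (forall x y, R x y -> R' x y) -> answers mP mQ R x y -> answers mP mQ R' x y.
Proof.
  intros RR' A x' m; destruct (A x' m) as [[x'' [m2 r]]|[y' [m2 r]]]; eauto.
Qed.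

(* [PPos mP mQ x y]: the sum x + y is a P-position (the second player wins). *)
Inductive PPos {P Q : Type} (mP : P -> P -> Prop) (mQ : Q -> Q -> Prop) (x : P) (y : Q) : Prop :=
  ppos_intro :
    answers mP mQ (PPos mP mQ) x y ->
    answers mQ mP (fun y x => PPos mP mQ x y) y x ->
    PPos mP mQ x y.

Lemma ppos_of_strategy {P Q} (mP : P -> P -> Prop) (mQ : Q -> Q -> Prop) R :
  strategy mP mQ R ->
  forall x y, terminates mP x -> terminates mQ y -> R x y -> PPos mP mQ x y.
Proof.
  intros HR x y ax ay. apply Acc_clos_trans in ax. apply Acc_clos_trans in ay.
  revert y ay. induction ax as [x _ IHx]; intros y ay; induction ay as [y Hy IHy]; intro r.
  destruct (HR x y r) as [Hl Hr]; constructor.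
  - intros x' mx; destruct (Hl x' mx) as [[x'' [m2 r2]]|[y' [m2 r2]]].
    + left; exists x''; split; [exact m2|].
      apply IHx; [eapply t_trans; apply t_step; eauto|constructor; exact Hy|exact r2].
    + right; exists y'; split; [exact m2|].
      apply IHx; [apply t_step; exact mx|apply Hy, t_step, m2|exact r2].
  - intros y' my; destruct (Hr y' my) as [[y'' [m2 r2]]|[x' [m2 r2]]].
    + left; exists y''; split; [exact m2|].
      apply IHy; [eapply t_trans; apply t_step; eauto|exact r2].
    + right; exists x'; split; [exact m2|].
      apply IHx; [apply t_step; exact m2|apply Hy, t_step, my|exact r2].
Qed.

Lemma ppos_options {P Q} (mP : P -> P -> Prop) (mQ : Q -> Q -> Prop) :
  forall x y, terminates mP x -> terminates mQ y -> PPos mP mQ x y ->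
  (forall x', mP x x' -> ~ PPos mP mQ x' y) /\ (forall y', mQ y y' -> ~ PPos mP mQ x y').
Proof.
  intros x y ax; revert y; induction ax as [x Hx IHx]; intros y ay; induction ay as [y Hy IHy].
  intros [Hl Hr]; split.
  - intros x' m L'; destruct (Hl x' m) as [[x'' [m2 L'']]|[y' [m2 L'']]].
    + exact (proj1 (IHx x' m y (Acc_intro y Hy) L') x'' m2 L'').
    + exact (proj2 (IHx x' m y (Acc_intro y Hy) L') y' m2 L'').
  - intros y' m L'; destruct (Hr y' m) as [[y'' [m2 L'']]|[x' [m2 L'']]].
    + exact (proj2 (IHy y' m L') y'' m2 L'').
    + exact (proj1 (IHy y' m L') x' m2 L'').
Qed.

Lemma gamma_sym : forall k {P Q} (mP : P -> P -> Prop) (mQ : Q -> Q -> Prop) x y,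
  gamma_eq k mP x mQ y -> gamma_eq k mQ y mP x.
Proof.
  induction k as [|k IH]; simpl; intros P Q mP mQ x y.
  - intros [a [b [ga [gb e]]]]; exists b, a; split; auto; split; auto; apply oeq_sym; auto.
  - intros [A B]; split.
    + intros y' m; destruct (B y' m) as [x' [m' E]]; exists x'; split; auto.
    + intros x' m; destruct (A x' m) as [y' [m' E]]; exists y'; split; auto.
Qed.

(* The Sprague–Grundy answer: in a sum x + y with equal Grundy values, a move
   to a smaller value is matched in the other summand, a move to a larger
   value is reversed in the same summand. *)
Lemma gamma0_answers {P Q} (mP : P -> P -> Prop) (mQ : Q -> Q -> Prop) x y :
  gamma_eq 0 mP x mQ y -> answers mP mQ (fun x y => gamma_eq 0 mP x mQ y) x y.
Proof.
  intros [a [b [ga [gb e]]]] x' m.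
  destruct (proj1 (grundy_inv _ _ _ ga) x' m) as [c [gc nc]].
  destruct (ord_trichotomy c a) as [E|[L|L]]; [contradiction| |].
  - destruct (proj2 (grundy_inv _ _ _ gb) c (olt_oeq_trans _ _ _ L e)) as [y' [d [my [gd ed]]]].
    right; exists y'; split; [exact my|exists c, d; split; [|split]; auto; apply oeq_sym, ed].
  - destruct (proj2 (grundy_inv _ _ _ gc) a L) as [x'' [d [mx [gd ed]]]].
    left; exists x''; split; [exact mx|exists d, b; split; [|split]; auto; eapply oeq_trans; eauto].
Qed.

Lemma gamma0_strategy {P Q} (mP : P -> P -> Prop) (mQ : Q -> Q -> Prop) :
  strategy mP mQ (fun x y => gamma_eq 0 mP x mQ y).
Proof.
  intros x y e; split; [exact (gamma0_answers _ _ _ _ e)|].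
  apply (answers_impl _ _ (fun y x => gamma_eq 0 mQ y mP x)); [intros ? ?; apply gamma_sym|].
  apply gamma0_answers, gamma_sym, e.
Qed.

Lemma gamma0_of_ppos {P Q} (mP : P -> P -> Prop) (mQ : Q -> Q -> Prop) x y :
  terminates mP x -> terminates mQ y -> PPos mP mQ x y -> gamma_eq 0 mP x mQ y.
Proof.
  intros ax ay L.
  destruct (grundy_exists _ x ax) as [a ga]; destruct (grundy_exists _ y ay) as [b gb].
  exists a, b; split; [exact ga|split; [exact gb|]].
  destruct (ord_trichotomy a b) as [E|[Lt|Lt]]; [exact E|exfalso|exfalso].
  - destruct (proj2 (grundy_inv _ _ _ gb) a Lt) as [y' [d [my [gd ed]]]].
    apply (proj2 (ppos_options _ _ x y ax ay L) y' my).
    apply (ppos_of_strategy _ _ _ (gamma0_strategy mP mQ)); [exact ax|exact (Acc_inv ay my)|].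
    exists a, d; split; [|split]; auto; apply oeq_sym, ed.
  - destruct (proj2 (grundy_inv _ _ _ ga) b Lt) as [x' [d [mx [gd ed]]]].
    apply (proj1 (ppos_options _ _ x y ax ay L) x' mx).
    apply (ppos_of_strategy _ _ _ (gamma0_strategy mP mQ)); [exact (Acc_inv ax mx)|exact ay|].
    exists d, b; split; [|split]; auto.
Qed.

Lemma gamma0_of_strategy {P Q} (mP : P -> P -> Prop) (mQ : Q -> Q -> Prop) R x y :
  strategy mP mQ R -> terminates mP x -> terminates mQ y -> R x y -> gamma_eq 0 mP x mQ y.
Proof.
  intros HR ax ay r; apply gamma0_of_ppos; [exact ax|exact ay|].
  exact (ppos_of_strategy _ _ R HR x y ax ay r).
Qed.

Lemma gamma_down : forall k {P Q} (mP : P -> P -> Prop) (mQ : Q -> Q -> Prop) x y,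
  terminates mP x -> terminates mQ y -> gamma_eq (S k) mP x mQ y -> gamma_eq k mP x mQ y.
Proof.
  induction k as [|k IH]; intros P Q mP mQ x y ax ay [A B].
  - (* equal option sets of Grundy values: answer each move by its partner *)
    apply gamma0_of_ppos; [exact ax|exact ay|constructor].
    + intros x' m; destruct (A x' m) as [y' [m' e]]; right; exists y'; split; [exact m'|].
      exact (ppos_of_strategy _ _ _ (gamma0_strategy mP mQ) _ _ (Acc_inv ax m) (Acc_inv ay m') e).
    + intros y' m; destruct (B y' m) as [x' [m' e]]; right; exists x'; split; [exact m'|].
      exact (ppos_of_strategy _ _ _ (gamma0_strategy mP mQ) _ _ (Acc_inv ax m') (Acc_inv ay m) e).
  - split.
    + intros x' m; destruct (A x' m) as [y' [m' e]]; exists y'; split; [exact m'|].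
      exact (IH _ _ _ _ _ _ (Acc_inv ax m) (Acc_inv ay m') e).
    + intros y' m; destruct (B y' m) as [x' [m' e]]; exists x'; split; [exact m'|].
      exact (IH _ _ _ _ _ _ (Acc_inv ax m') (Acc_inv ay m) e).
Qed.

Section OrderedJoin.

Context {T : Type} (le : T -> T -> Prop).

Definition jpos (G : T -> Game) : Type := forall i, option (pos (G i)).

Definition updated_at {G : T -> Game} (j : T) (f f' : jpos G) : Prop :=
  (forall l, slt le j l -> f' l = None) /\ (forall l, l <> j -> ~ slt le j l -> f' l = f l).

Definition upd (G : T -> Game) (f : jpos G) (j : T) (v : pos (G j)) : jpos G :=
  fun i => match excluded_middle_informative (j = i) with
  | left e => eq_rect j (fun i => option (pos (G i))) (Some v) i e
  | right _ => if excluded_middle_informative (slt le j i) then None else f i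
  end.

Lemma upd_at G f j v : upd G f j v j = Some v.
Proof.
  unfold upd; destruct (excluded_middle_informative (j = j)) as [e|n]; [|contradiction].
  rewrite <- Eq_rect_eq.eq_rect_eq; reflexivity.
Qed.

Lemma upd_updated_at G f j v : updated_at j f (upd G f j v).
Proof.
  split; intros l; unfold upd; destruct (excluded_middle_informative (j = l)) as [e|n].
  - intros [_ n]; contradiction.
  - intro Hl; destruct (excluded_middle_informative (slt le j l)); [reflexivity|contradiction].
  - intros n; exfalso; exact (n (eq_sym e)).
  - intros _ Hl; destruct (excluded_middle_informative (slt le j l)); [contradiction|reflexivity].
Qed.

Lemma upd_mv G f j u v : f j = Some u -> mv (G j) u v -> join_mv le G f (upd G f j v).
Proof.
  intros E m; exists j, u, v.
  split; [exact E|split; [exact m|split; [apply upd_at|apply upd_updated_at]]].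
Qed.

Lemma updated_at_trans G j (f f' f'' : jpos G) :
  updated_at j f f' -> updated_at j f' f'' -> updated_at j f f''.
Proof. intros [A B] [C D]; split; auto. intros l n1 n2; rewrite D, B; auto. Qed.

Lemma terminates_component G (f : jpos G) : terminates (join_mv le G) f ->
  forall i u, f i = Some u -> terminates (mv (G i)) u.
Proof.
  induction 1 as [f _ IH]; intros i u E; constructor; intros v m.
  exact (IH _ (upd_mv G f i u v E m) i v (upd_at G f i v)).
Qed.

Definition zero_at {G H : T -> Game} (f : jpos G) (g : jpos H) (i : T) : Prop :=
  f i = None /\ g i = None.

Definition agree (k : nat) (G H : T -> Game) (f : jpos G) (g : jpos H) (i : T) : Prop :=
  zero_at f g i \/ exists u u', f i = Some u /\ g i = Some u' /\
    gamma_eq k (mv (G i)) u (mv (H i)) u'.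

Definition agree_mixed (k : nat) (G H : T -> Game) (f : jpos G) (g : jpos H) (i : T) : Prop :=
  zero_at f g i \/ exists u u', f i = Some u /\ g i = Some u' /\
    (gamma_eq (S k) (mv (G i)) u (mv (H i)) u' \/
     (gamma_eq k (mv (G i)) u (mv (H i)) u' /\ forall l, slt le i l -> zero_at f g l)).

Lemma agree_sym k G H f g i : agree k G H f g i -> agree k H G g f i.
Proof.
  intros [[A B]|[u [u' [E1 [E2 C]]]]]; [left; split; auto|].
  right; exists u', u; split; [|split]; auto; apply gamma_sym, C.
Qed.

Lemma agree_mixed_sym k G H f g i : agree_mixed k G H f g i -> agree_mixed k H G g f i.
Proof.
  intros [[A B]|[u [u' [E1 [E2 C]]]]]; [left; split; auto|].
  right; exists u', u; split; [|split]; auto.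
  destruct C as [C|[C D]]; [left; apply gamma_sym, C|right; split; [apply gamma_sym, C|]].
  intros l Hl; destruct (D l Hl); split; auto.
Qed.

(* Playing at a nonzero component j in both positions preserves the invariant
   at every other component i: components above j vanish, the others (and
   the zeros above them) are untouched. *)
Lemma agree_mixed_elsewhere k G H f g f' g' j i :
  agree_mixed k G H f g i -> updated_at j f f' -> updated_at j g g' ->
  f j <> None -> i <> j -> agree_mixed k G H f' g' i.
Proof.
  intros M [Zf Kf] [Zg Kg] Nj nij.
  destruct (classic (slt le j i)) as [A|A]; [left; split; auto|].
  unfold agree_mixed, zero_at; rewrite (Kf i nij A), (Kg i nij A).
  destruct M as [N|[u [u' [E1 [E2 [C|[C D]]]]]]]; [left; exact N| |].
  - right; exists u, u'; auto.
  - right; exists u, u'; split; [|split; [|right; split]]; auto.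
    intros l Hl; destruct (classic (l = j)) as [->|nl].
    + exfalso; apply Nj, (D j Hl).
    + destruct (classic (slt le j l)) as [B|B]; [split; auto|].
      rewrite (Kf l nl B), (Kg l nl B); apply D, Hl.
Qed.

Lemma agree_mixed_reply k G H f g f' j v v' :
  (forall i, agree_mixed k G H f g i) -> f j <> None -> updated_at j f f' ->
  f' j = Some v -> gamma_eq k (mv (G j)) v (mv (H j)) v' ->
  forall i, agree_mixed k G H f' (upd H g j v') i.
Proof.
  intros M Nj Uf Ef' e i; destruct (classic (i = j)) as [->|nij].
  - right; exists v, v'; split; [exact Ef'|split; [apply upd_at|right; split; [exact e|]]].
    intros l Hl; split; [exact (proj1 Uf l Hl)|exact (proj1 (upd_updated_at H g j v') l Hl)].
  - exact (agree_mixed_elsewhere k G H f g f' _ j i (M i) Uf (upd_updated_at H g j v') Nj nij).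
Qed.

(* [agree_mixed 0] is a strategy invariant for the sum of the two joins: a
   move at a ~1-related component is copied, a move at the topmost
   ~0-related component gets the Sprague–Grundy answer. *)
Lemma join_answers0 G H f g :
  (forall i, agree_mixed 0 G H f g i) ->
  answers (join_mv le G) (join_mv le H) (fun f g => forall i, agree_mixed 0 G H f g i) f g.
Proof.
  intros M f' [j [u [v [Ef [m [Ef' Uf]]]]]].
  assert (Nj : f j <> None) by congruence.
  destruct (M j) as [[Z _]|[u0 [u' [E1 [Eg [C|[C Top]]]]]]]; [congruence| |];
    rewrite Ef in E1; injection E1 as <-.
  - destruct (proj1 C v m) as [v' [m' e]].
    right; exists (upd H g j v'); split; [exact (upd_mv H g j u' v' Eg m')|].
    exact (agree_mixed_reply 0 G H f g f' j v v' M Nj Uf Ef' e).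
  - destruct (gamma0_answers _ _ _ _ C v m) as [[v'' [m2 e]]|[v' [m' e]]].
    + left; exists (upd G f' j v''); split; [exact (upd_mv G f' j v v'' Ef' m2)|].
      intro i; destruct (classic (i = j)) as [->|nij].
      * right; exists v'', u'; split; [apply upd_at|split; [exact Eg|right; split; [exact e|]]].
        intros l Hl; split; [exact (proj1 (upd_updated_at G f' j v'') l Hl)|].
        exact (proj2 (Top l Hl)).
      * apply (agree_mixed_elsewhere 0 G H f g _ g j i (M i)); [| |exact Nj|exact nij].
        -- exact (updated_at_trans G j _ _ _ Uf (upd_updated_at G f' j v'')).
        -- split; [intros l Hl; exact (proj2 (Top l Hl))|reflexivity].
    + right; exists (upd H g j v'); split; [exact (upd_mv H g j u' v' Eg m')|].
      exact (agree_mixed_reply 0 G H f g f' j v v' M Nj Uf Ef' e).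
Qed.

Lemma join_gamma0 G H f g :
  terminates (join_mv le G) f -> terminates (join_mv le H) g ->
  (forall i, agree_mixed 0 G H f g i) -> gamma_eq 0 (join_mv le G) f (join_mv le H) g.
Proof.
  intros aF aG M0.
  apply (gamma0_of_strategy _ _ (fun f g => forall i, agree_mixed 0 G H f g i)); auto.
  intros x y M; split; [exact (join_answers0 G H x y M)|].
  apply (answers_impl _ _ (fun y x => forall i, agree_mixed 0 H G y x i)).
  - intros y' x' M' i; apply agree_mixed_sym, M'.
  - apply join_answers0; intro i; apply agree_mixed_sym, M.
Qed.

Lemma join_reply k G H f g f' :
  (forall i, agree (S k) G H f g i) -> join_mv le G f f' ->
  exists g', join_mv le H g g' /\ forall i, agree_mixed k G H f' g' i.
Proof.
  intros K [j [u [v [Ef [m [Ef' Uf]]]]]].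
  destruct (K j) as [[Z _]|[u0 [u' [E1 [Eg [C _]]]]]]; [congruence|];
    rewrite Ef in E1; injection E1 as <-.
  destruct (C v m) as [v' [m' e]].
  exists (upd H g j v'); split; [exact (upd_mv H g j u' v' Eg m')|].
  apply (agree_mixed_reply k G H f g f' j v v'); [|congruence|exact Uf|exact Ef'|exact e].
  intro i; destruct (K i) as [Z|[w [w' [A [B D]]]]]; [left; exact Z|].
  right; exists w, w'; auto.
Qed.

Lemma agree_of_agree_mixed k G H f g :
  terminates (join_mv le G) f -> terminates (join_mv le H) g ->
  (forall i, agree_mixed (S k) G H f g i) -> forall i, agree (S k) G H f g i.
Proof.
  intros aF aG M i; destruct (M i) as [Z|[u [u' [E1 [E2 C]]]]]; [left; exact Z|].
  right; exists u, u'; split; [exact E1|split; [exact E2|]].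
  destruct C as [C|[C _]]; [|exact C].
  apply gamma_down; [exact (terminates_component G f aF i u E1)|
                     exact (terminates_component H g aG i u' E2)|exact C].
Qed.

Lemma join_gamma_step k
  (IH : forall G H f g, terminates (join_mv le G) f -> terminates (join_mv le H) g ->
     (forall i, agree_mixed k G H f g i) -> gamma_eq k (join_mv le G) f (join_mv le H) g) :
  forall G H f g, terminates (join_mv le G) f -> terminates (join_mv le H) g ->
  (forall i, agree (S k) G H f g i) -> gamma_eq (S k) (join_mv le G) f (join_mv le H) g.
Proof.
  intros G H f g aF aG K; split.
  - intros f' m; destruct (join_reply k G H f g f' K m) as [g' [m' M]].
    exists g'; split; [exact m'|exact (IH G H f' g' (Acc_inv aF m) (Acc_inv aG m') M)].
  - intros g' m.
    destruct (join_reply k H G g f g' (fun i => agree_sym _ G H f g i (K i)) m) as [f' [m' M]].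
    exists f'; split; [exact m'|].
    apply IH; [exact (Acc_inv aF m')|exact (Acc_inv aG m)|intro i; apply agree_mixed_sym, M].
Qed.

Lemma join_gamma_mixed k : forall G H f g,
  terminates (join_mv le G) f -> terminates (join_mv le H) g ->
  (forall i, agree_mixed k G H f g i) -> gamma_eq k (join_mv le G) f (join_mv le H) g.
Proof.
  induction k as [|k IH]; intros G H f g aF aG M; [exact (join_gamma0 G H f g aF aG M)|].
  exact (join_gamma_step k IH G H f g aF aG (agree_of_agree_mixed k G H f g aF aG M)).
Qed.

End OrderedJoin.

Theorem mainTheorem10 (k : nat) (hk : 1 <= k)
  (S : Type) (le : S -> S -> Prop)
  (le_refl : forall i, le i i)
  (le_antisym : forall i j, le i j -> le j i -> i = j)
  (le_trans : forall i j l, le i j -> le j l -> le i l)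
  (G H : S -> Game)
  (termG : terminating (ojoin le G))
  (termH : terminating (ojoin le H))
  (hGH : forall i, Gamma_eq k (G i) (H i)) :
  Gamma_eq k (ojoin le G) (ojoin le H).
Proof.
  destruct k as [|k]; [inversion hk|].
  (* the roots agree componentwise at level k+1 *)
  apply (join_gamma_step le k (join_gamma_mixed le k) G H); [exact termG|exact termH|].
  intro i; right; exists (root (G i)), (root (H i)).
  split; [reflexivity|split; [reflexivity|exact (hGH i)]].
Qed.
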